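(* Let $R$ be a commutative ring with $R=2R$, $I$ an ideal of $R$ and $n\ge2$. Let $P=R^{2n}$ with the form $\langle p,q\rangle=p^t\widetilde\psi_nq$, and $Q=R^2\oplus P=R^{2n+2}$ with the form $\langle x,y\rangle=x^t\widetilde\psi_{n+1}y$ (the induced form of $\mathbb{H}(R)\oplus P$). Then, as subgroups of $\mathrm{GL}_{2n+2}(R)$, $$\mathrm{ETrans}_{\mathrm{O}}(Q,IQ,\langle\,,\rangle_{\widetilde\psi_{n+1}})=\mathrm{EO}_{2n+2}(R,I).$$
   Context: $\widetilde\psi_m=\sum_{i=1}^m(e_{2i-1,2i}+e_{2i,2i-1})$. Let $\sigma$ be the permutation of $\{1,\dots,2m\}$ with $\sigma(2i)=2i-1$, $\sigma(2i-1)=2i$; for $z\in R$, $1\le i\ne j\le 2m$, $i\ne\sigma(j)$, $oe_{ij}(z)=1_{2m}+ze_{ij}-ze_{\sigma(j)\sigma(i)}$; $\mathrm{EO}_{2m}(R)$ is generated by all $oe_{ij}(z)$, $\mathrm{EO}_{2m}(I)$ by those with $z\in I$, and $\mathrm{EO}_{2m}(R,I)$ is the normal closure of $\mathrm{EO}_{2m}(I)$ in $\mathrm{EO}_{2m}(R)$. For a symmetric invertible $2n\times 2n$ matrix $\varphi$ and $q\in R^{2n}$ with $q^t\varphi q=0$, define the $(2n+2)\times(2n+2)$ block matrices (blocks of sizes $1,1,2n$) $\rho_\varphi(q)=\begin{pmatrix}1&0&0\\0&1&q^t\varphi\\-q&0&I_{2n}\end{pmatrix}$, $\mu_\varphi(q)=\begin{pmatrix}1&0&q^t\varphi\\0&1&0\\0&-q&I_{2n}\end{pmatrix}$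 (the elementary orthogonal transvections $(a,b,p)\mapsto(a,b+\langle p,q\rangle,p-aq)$ and $(a,b,p)\mapsto(a+\langle p,q\rangle,b,p-bq)$ of $Q=R^2\oplus R^{2n}$ with form $\widetilde\psi_1\perp\varphi$). $\mathrm{ETrans}_{\mathrm{O}}(Q,\langle\,,\rangle_{\widetilde\psi_1\perp\varphi})$ is generated by all $\rho_\varphi(q),\mu_\varphi(q)$; $\mathrm{ETrans}_{\mathrm{O}}(IQ,\ldots)$ by those with $q\in I^{2n}$; and $\mathrm{ETrans}_{\mathrm{O}}(Q,IQ,\langle\,,\rangle_{\widetilde\psi_1\perp\varphi})$ is the normal closure of the latter in the former. Here $\varphi=\widetilde\psi_n$, so $\widetilde\psi_1\perp\varphi=\widetilde\psi_{n+1}$. *)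

From HB Require Import structures.
From mathcomp Require Import all_boot all_order all_algebra.
Set Implicit Arguments. Unset Strict Implicit. Unset Printing Implicit Defensive.
Import Order.TTheory GRing.Theory Num.Theory.
Local Open Scope ring_scope.

(* Indices are 0-based: index a (0 <= a < 2m) stands for the paper's a+1. *)
Definition sig (a : nat) : nat := if odd a then a.-1 else a.+1.

Definition psi (R : comPzRingType) (m : nat) : 'M[R]_(m.*2) :=
  \matrix_(a, b) ((val b == sig (val a))%:R).

Definition is_ideal (R : comPzRingType) (I : R -> Prop) : Prop :=
  [/\ I 0, (forall x y, I x -> I y -> I (x + y)) & (forall r x, I x -> I (r * x))].

Inductive gen (R : comPzRingType) (N : nat) (S : 'M[R]_N -> Prop) : 'M[R]_N -> Prop :=
  | gen1 : gen S 1%:M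
  | genS x : S x -> gen S x
  | genM x y : gen S x -> gen S y -> gen S (x *m y)
  | genV x y : S x -> x *m y = 1%:M -> y *m x = 1%:M -> gen S y.

Definition ncl (R : comPzRingType) (N : nat) (G H : 'M[R]_N -> Prop) : 'M[R]_N -> Prop :=
  gen (fun x => exists g g' h,
        [/\ G g, g *m g' = 1%:M, g' *m g = 1%:M, H h & x = g *m h *m g']).

Definition oe (R : comPzRingType) (m : nat) (i j : 'I_(m.*2)) (z : R) : 'M[R]_(m.*2) :=
  \matrix_(a, b) ((a == b)%:R + z * ((a == i) && (b == j))%:R
                  - z * ((val a == sig (val j)) && (val b == sig (val i)))%:R).

Definition oe_gens (R : comPzRingType) (m : nat) (J : R -> Prop) : 'M[R]_(m.*2) -> Prop :=
  fun g => exists (i j : 'I_(m.*2)) (z : R),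
    [/\ i != j, val i != sig (val j), J z & g = oe i j z].

Definition EO (R : comPzRingType) (m : nat) : 'M[R]_(m.*2) -> Prop :=
  gen (@oe_gens R m (fun _ => True)).
Definition EO_I (R : comPzRingType) (m : nat) (I : R -> Prop) : 'M[R]_(m.*2) -> Prop :=
  gen (@oe_gens R m I).
Definition EO_rel (R : comPzRingType) (m : nat) (I : R -> Prop) : 'M[R]_(m.*2) -> Prop :=
  ncl (@EO R m) (@EO_I R m I).

Definition rho (R : comPzRingType) (n : nat) (q : 'cV[R]_(n.*2)) : 'M[R]_(n.+1.*2) :=
  block_mx (1%:M : 'M[R]_(1 + 1)) (col_mx (0 : 'M[R]_(1, n.*2)) (q^T *m psi R n))
           (row_mx (- q) (0 : 'M[R]_(n.*2, 1))) (1%:M : 'M[R]_(n.*2)).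

Definition mu (R : comPzRingType) (n : nat) (q : 'cV[R]_(n.*2)) : 'M[R]_(n.+1.*2) :=
  block_mx (1%:M : 'M[R]_(1 + 1)) (col_mx (q^T *m psi R n) (0 : 'M[R]_(1, n.*2)))
           (row_mx (0 : 'M[R]_(n.*2, 1)) (- q)) (1%:M : 'M[R]_(n.*2)).

Definition etrans_gens (R : comPzRingType) (n : nat) (J : R -> Prop) : 'M[R]_(n.+1.*2) -> Prop :=
  fun g => exists q : 'cV[R]_(n.*2),
    [/\ q^T *m psi R n *m q = 0, (forall k, J (q k 0)) & (g = rho q \/ g = mu q)].

Definition ETrans (R : comPzRingType) (n : nat) : 'M[R]_(n.+1.*2) -> Prop :=
  gen (@etrans_gens R n (fun _ => True)).
Definition ETrans_I (R : comPzRingType) (n : nat) (I : R -> Prop) : 'M[R]_(n.+1.*2) -> Prop :=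
  gen (@etrans_gens R n I).
Definition ETrans_rel (R : comPzRingType) (n : nat) (I : R -> Prop) : 'M[R]_(n.+1.*2) -> Prop :=
  ncl (@ETrans R n) (@ETrans_I R n I).

From HB Require Import structures.
From mathcomp Require Import all_boot all_order all_algebra.
From mathcomp Require Import ring zify.
Set Implicit Arguments. Unset Strict Implicit. Unset Printing Implicit Defensive.
Import Order.TTheory GRing.Theory Num.Theory.
Local Open Scope ring_scope.

(* Write Q = H + P with the hyperbolic plane H on the first two coordinates.
   The generators rho(q), mu(q) are Eichler transformations E(q); since 2 is
   invertible, correcting the corner entry of E(q) by -<q,q>/2 turns q |-> E(q)
   into a homomorphism from (P, +).  Hence E(q) = prod_k E(q_k e_k), and each
   factor is an elementary oe_ij(q_k) with one index in H and one in P.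
   Conversely each such oe_ij(z) is rho or mu of a multiple of a basis vector,
   and an oe_ij(z) with both indices in P is the commutator of oe_i0(z) and
   oe_0j(1).  So the generators of each relative group lie in the other
   relative group, and the two normal closures coincide. *)

Lemma sigK : involutive sig.
Proof.
case=> [|a] //; rewrite /sig /=.
by case: (boolP (odd a)) => h /=; rewrite ?h ?(negbTE h).
Qed.

Lemma sig_neq a : sig a != a.
Proof. by rewrite /sig; case: ifP => h; apply/eqP; [case: a h => //=|]; lia. Qed.

Lemma sigSS a : sig a.+2 = (sig a).+2.
Proof. by rewrite /sig /= negbK; case: a => [|a] //=; case: (odd a). Qed.

Lemma ltn_sig m a : (a < m.*2)%N -> (sig a < m.*2)%N.
Proof.
rewrite /sig; case: ifP => odd_a lt_a; first by case: a odd_a lt_a => // a _ /ltnW.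
have: (a.+1 <= m.*2)%N by [].
by rewrite leq_eqVlt => /orP [/eqP e|//]; move: (odd_double m); rewrite -e /= odd_a.
Qed.

Section GeneratedGroups.
Variables (R : comPzRingType) (N : nat).
Implicit Types (S T G H : 'M[R]_N -> Prop) (x y g h : 'M[R]_N).

Definition invertible_set S :=
  forall x, S x -> exists y, x *m y = 1%:M /\ y *m x = 1%:M.

Lemma gen_invertible S : invertible_set S ->
  forall g, gen S g -> exists2 g', gen S g' & g *m g' = 1%:M /\ g' *m g = 1%:M.
Proof.
move=> invS g; elim=> {g}.
- by exists 1%:M; [exact: gen1 | rewrite mul1mx].
- move=> x Sx; have [y [xy yx]] := invS x Sx.
  by exists y; [exact: genV Sx xy yx | split].
- move=> x y _ [x' gx' [xx' x'x]] _ [y' gy' [yy' y'y]].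
  exists (y' *m x'); first exact: genM.
  by rewrite !mulmxA -(mulmxA x) -(mulmxA y') yy' x'x !mulmx1.
- by move=> x y Sx xy yx; exists x; [exact: genS | split].
Qed.

Lemma gen_sub S T : invertible_set T -> (forall x, S x -> gen T x) ->
  forall g, gen S g -> gen T g.
Proof.
move=> invT sST g; elim=> {g}; [exact: gen1 | exact: sST | by move=> *; apply: genM|].
move=> x y /sST Tx xy _; have [x' Tx' [_ x'x]] := gen_invertible invT Tx.
suff -> : y = x' by [].
by rewrite -[y]mul1mx -x'x -mulmxA xy mulmx1.
Qed.

Lemma gen_prod S (I : Type) (r : seq I) (F : I -> 'M[R]_N) :
  (forall i, gen S (F i)) -> gen S (\big[@mulmx R N N N/1%:M]_(i <- r) F i).
Proof.
move=> SF; elim: r => [|i r IHr]; first by rewrite big_nil; exact: gen1.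
by rewrite big_cons; apply: genM.
Qed.

Definition conjugates G H x := exists g g' h,
  [/\ G g, g *m g' = 1%:M, g' *m g = 1%:M, H h & x = g *m h *m g'].

Lemma conjugates_conj G H x k k' : (forall x y, G x -> G y -> G (x *m y)) ->
  conjugates G H x -> G k -> k *m k' = 1%:M -> k' *m k = 1%:M ->
  conjugates G H (k *m x *m k').
Proof.
move=> mulG [g [g' [h [Gg gg' g'g Hh ->]]]] Gk kk' k'k.
exists (k *m g), (g' *m k'), h; split; rewrite ?mulmxA //; first exact: mulG.
- by rewrite -(mulmxA k) gg' mulmx1.
- by rewrite -(mulmxA g') k'k mulmx1.
Qed.

Lemma conjugates_invertible G H : invertible_set H -> invertible_set (conjugates G H).
Proof.
move=> invH x [g [g' [h [_ gg' g'g /invH [h' [hh' h'h]] ->]]]].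
exists (g *m h' *m g'); rewrite !mulmxA -!(mulmxA _ g' g) g'g !mulmx1.
by rewrite -(mulmxA _ h) -(mulmxA _ h') hh' h'h !mulmx1.
Qed.

Lemma ncl_conj G H : (forall x y, G x -> G y -> G (x *m y)) ->
  forall y k k', ncl G H y -> G k -> k *m k' = 1%:M -> k' *m k = 1%:M ->
  ncl G H (k *m y *m k').
Proof.
move=> mulG y k k' ncly Gk kk' k'k; elim: ncly => {y}.
- by rewrite mulmx1 kk'; exact: gen1.
- by move=> x Cx; apply: genS; exact: conjugates_conj.
- move=> x y _ IHx _ IHy.
  have -> : k *m (x *m y) *m k' = (k *m x *m k') *m (k *m y *m k').
    by rewrite !mulmxA -(mulmxA _ k' k) k'k mulmx1.
  exact: genM.
- move=> x y Cx xy yx; apply: (@genV _ _ _ (k *m x *m k')); first exact: conjugates_conj.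
  + by rewrite !mulmxA -(mulmxA _ k' k) k'k mulmx1 -(mulmxA _ x y) xy mulmx1.
  + by rewrite !mulmxA -(mulmxA _ k' k) k'k mulmx1 -(mulmxA _ y x) yx mulmx1.
Qed.

Lemma ncl_gen G H h : G 1%:M -> H h -> ncl G H h.
Proof.
by move=> G1 Hh; apply: genS; exists 1%:M, 1%:M, h; rewrite ?mulmx1 ?mul1mx.
Qed.

Lemma ncl_sub G S G' S' :
  (forall x y, G' x -> G' y -> G' (x *m y)) -> invertible_set S' ->
  (forall g, G g -> G' g) -> (forall h, S h -> ncl G' (gen S') h) ->
  forall x, ncl G (gen S) x -> ncl G' (gen S') x.
Proof.
move=> mulG' invS' sGG' sSS'.
have invC : invertible_set (conjugates G' (gen S')).
  by apply: conjugates_invertible => h /(gen_invertible invS') [h' _ hh']; exists h'.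
apply: (gen_sub invC) => _ [g [g' [h [/sGG' G'g gg' g'g Sh ->]]]].
by apply: ncl_conj => //; exact: gen_sub invC sSS' _ Sh.
Qed.

End GeneratedGroups.

Lemma unipotent_commutator (R : comPzRingType) N (A B : 'M[R]_N) :
  A *m A = 0 -> B *m B = 0 -> A *m B *m A = 0 -> B *m A *m B = 0 ->
  (1%:M + A) *m (1%:M + B) *m (1%:M - A) *m (1%:M - B) = 1%:M + A *m B - B *m A.
Proof.
move=> AA BB ABA BAB.
have -> : (1%:M + A) *m (1%:M + B) = 1%:M + A + B + A *m B.
  rewrite mulmxDl !mulmxDr !mul1mx !mulmx1.
  by move: (A *m B) => X; apply/matrixP => a b; rewrite !mxE; ring.
have -> : (1%:M + A + B + A *m B) *m (1%:M - A) = 1%:M + B + A *m B - B *m A.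
  rewrite !mulmxDl !mulmxBr !mul1mx !mulmx1 AA ABA.
  by move: (A *m B) (B *m A) => X Y; apply/matrixP => a b; rewrite !mxE; ring.
rewrite !mulmxDl !mulmxBr !mulNmx !mul1mx !mulmx1 BB -(mulmxA A) BB mulmx0 BAB.
by move: (A *m B) (B *m A) => X Y; apply/matrixP => a b; rewrite !mxE; ring.
Qed.

Section OrthogonalElementary.
Variables (R : comPzRingType) (m : nat).
Local Notation M := 'M[R]_(m.*2).
Implicit Types (i j k : 'I_(m.*2)) (a b z : R).

Definition sigo i : 'I_(m.*2) := Ordinal (ltn_sig (ltn_ord i)).

Lemma sigoK : involutive sigo.
Proof. by move=> i; apply: val_inj; rewrite /= sigK. Qed.

Lemma sigo_eq i j : (sigo i == sigo j) = (i == j).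
Proof. exact: (inj_eq (can_inj sigoK)). Qed.

Lemma sigo_eqL i j : (sigo i == j) = (i == sigo j).
Proof. by rewrite -sigo_eq sigoK. Qed.

Lemma sigo_neq i : ((sigo i == i) = false) * ((i == sigo i) = false).
Proof.
have F : (sigo i == i) = false by apply/negbTE; rewrite -val_eqE sig_neq.
by split; rewrite // eq_sym.
Qed.

Lemma neqF i j : i != j ->
  ((i == j) = false) * ((j == i) = false) *
  ((sigo i == sigo j) = false) * ((sigo j == sigo i) = false).
Proof. by move=> /negbTE ij; rewrite !sigo_eq ij eq_sym ij. Qed.

Lemma neq_sigoF i j : i != sigo j ->
  ((i == sigo j) = false) * ((sigo j == i) = false) *
  ((sigo i == j) = false) * ((j == sigo i) = false).
Proof. by move=> /negbTE ij; rewrite !sigo_eqL ij [j == _]eq_sym sigo_eqL ij. Qed.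

Definition oe_dir i j : M := delta_mx i j - delta_mx (sigo j) (sigo i).

Lemma oeE i j z : oe i j z = 1%:M + z *: oe_dir i j.
Proof. by apply/matrixP => a b; rewrite !mxE -!val_eqE /=; ring. Qed.

Lemma oe_sym i j z : oe i j z = oe (sigo j) (sigo i) (- z).
Proof. by rewrite !oeE /oe_dir !sigoK scaleNr -scalerN opprB. Qed.

Lemma oe_dirM i j k l : oe_dir i j *m oe_dir k l =
  delta_mx i l *+ (j == k) - delta_mx i (sigo k) *+ (j == sigo l)
  - delta_mx (sigo j) l *+ (sigo i == k) + delta_mx (sigo j) (sigo k) *+ (sigo i == sigo l).
Proof.
rewrite /oe_dir mulmxBl !mulmxBr !mul_delta_mx_cond.
by apply/matrixP => a b; rewrite !mxE; ring.
Qed.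

Lemma oe_inv i j z : i != j -> oe i j z *m oe i j (- z) = 1%:M.
Proof.
move=> ij; have sq0 : oe_dir i j *m oe_dir i j = 0.
  by rewrite oe_dirM !(neqF ij, sigo_neq) !mulr0n !subr0 addr0.
rewrite !oeE mulmxDl !mulmxDr !mul1mx mulmx1 -scalemxAl -scalemxAr sq0 !scaler0.
by rewrite addr0 scaleNr addrNK.
Qed.

Lemma oe_gens_invertible J : invertible_set (@oe_gens R m J).
Proof.
move=> _ [i [j [z [ij _ _ ->]]]]; exists (oe i j (- z)).
by rewrite oe_inv //; split; rewrite // -{2}(opprK z) oe_inv.
Qed.

Lemma oe_commutator i j k a b :
  i != j -> k != i -> k != sigo i -> k != j -> k != sigo j ->
  oe i k a *m oe k j b *m oe i k (- a) *m oe k j (- b) = oe i j (a * b).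
Proof.
move=> ij ki ksi kj ksj; set A := a *: oe_dir i k; set B := b *: oe_dir k j.
have neq := (neqF ij, neqF ki, neq_sigoF ksi, neqF kj, neq_sigoF ksj, sigo_neq).
have AB : A *m B = (a * b) *: delta_mx i j.
  by rewrite -scalemxAl -scalemxAr scalerA oe_dirM !neq eqxx !mulr0n !subr0 addr0.
have BA : B *m A = (a * b) *: delta_mx (sigo j) (sigo i).
  rewrite -scalemxAl -scalemxAr scalerA mulrC oe_dirM.
  by rewrite !neq eqxx !mulr0n !subr0 add0r mulr1n.
have AA : A *m A = 0.
  by rewrite -scalemxAl -scalemxAr oe_dirM !neq !mulr0n !subr0 addr0 !scaler0.
have BB : B *m B = 0.
  by rewrite -scalemxAl -scalemxAr oe_dirM !neq !mulr0n !subr0 addr0 !scaler0.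
have ABA : A *m B *m A = 0.
  rewrite AB -!scalemxAl -scalemxAr /oe_dir mulmxBr !mul_delta_mx_cond.
  by rewrite !neq !mulr0n subr0 !scaler0.
have BAB : B *m A *m B = 0.
  rewrite BA -!scalemxAl -scalemxAr /oe_dir mulmxBr !mul_delta_mx_cond.
  by rewrite !neq !mulr0n subr0 !scaler0.
rewrite !oeE /oe_dir -/A -/B !scaleNr -/A -/B unipotent_commutator // AB BA.
by rewrite scalerBr addrA.
Qed.

End OrthogonalElementary.

Lemma delta_mx_ur (R : pzSemiRingType) m1 m2 n1 n2 (i : 'I_m1) (j : 'I_n2) :
  delta_mx (lshift m2 i) (rshift n1 j)
  = block_mx 0 (delta_mx i j) 0 0 :> 'M[R]_(m1 + m2, n1 + n2).
Proof. by rewrite delta_mx_ushift delta_mx_rshift block_mxEv row_mx0. Qed.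

Lemma delta_mx_dl (R : pzSemiRingType) m1 m2 n1 n2 (i : 'I_m2) (j : 'I_n1) :
  delta_mx (rshift m1 i) (lshift n2 j)
  = block_mx 0 0 (delta_mx i j) 0 :> 'M[R]_(m1 + m2, n1 + n2).
Proof. by rewrite delta_mx_dshift delta_mx_lshift block_mxEv row_mx0. Qed.

Section Eichler.
Variables (R : comPzRingType) (n : nat).
Local Notation P := n.*2.
Implicit Types (p q : 'cV[R]_P) (u v : 'I_(1 + 1)) (c z : R) (k : 'I_P).

Definition psi_form p q : R := (p^T *m psi R n *m q) 0 0.

Lemma psi_tr : (psi R n)^T = psi R n.
Proof.
apply/matrixP => a b; rewrite !mxE; congr (_%:R).
by rewrite -(inj_eq (can_inj sigK)) sigK eq_sym.
Qed.

Lemma psi_form_sym p q : psi_form p q = psi_form q p.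
Proof.
rewrite /psi_form -[in LHS](@trmxK _ 1 1 (p^T *m _ *m q)) mxE.
by rewrite !trmx_mul trmxK psi_tr mulmxA.
Qed.

Lemma psi_formDl p p' q : psi_form (p + p') q = psi_form p q + psi_form p' q.
Proof. by rewrite /psi_form linearD /= !mulmxDl mxE. Qed.

Lemma psi_formDr p q q' : psi_form p (q + q') = psi_form p q + psi_form p q'.
Proof. by rewrite psi_form_sym psi_formDl (psi_form_sym q) (psi_form_sym q'). Qed.

Lemma psi_formNl p q : psi_form (- p) q = - psi_form p q.
Proof. by rewrite /psi_form linearN /= !mulNmx mxE. Qed.

Lemma psi_form0r p : psi_form p 0 = 0.
Proof. by rewrite /psi_form mulmx0 mxE. Qed.

Lemma isotropicP q : q^T *m psi R n *m q = 0 <-> psi_form q q = 0.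
Proof.
split=> [q0 | q0]; first by rewrite /psi_form q0 mxE.
by apply/matrixP => a b; rewrite !ord1 [RHS]mxE -q0.
Qed.

Lemma psi_row k : (delta_mx 0 k : 'rV_P) *m psi R n = delta_mx 0 (sigo k).
Proof. by apply/matrixP => a b; rewrite -rowE !mxE (ord1 a) eqxx. Qed.

Lemma psi_form_delta_self z k : psi_form (z *: delta_mx k 0) (z *: delta_mx k 0) = 0.
Proof.
rewrite /psi_form linearZ /= linearZ /= trmx_delta -scalemxAl psi_row -scalemxAl.
by rewrite mul_delta_mx_cond sigo_neq mulr0n !scaler0 mxE.
Qed.

Definition eichler u v c q : 'M[R]_(1 + 1 + P) :=
  block_mx (1%:M + c *: delta_mx v u) (delta_mx v 0 *m (q^T *m psi R n))
           (- (q *m delta_mx 0 u)) 1%:M.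

Lemma eichlerM u v c c' p q : u != v ->
  eichler u v c p *m eichler u v c' q = eichler u v (c + c' - psi_form p q) (p + q).
Proof.
move=> uv; have vu0 : delta_mx v u *m delta_mx v u = 0 :> 'M[R]_(1 + 1).
  by rewrite mul_delta_mx_0.
have u0v : delta_mx 0 u *m delta_mx v 0 = 0 :> 'M[R]_1 by rewrite mul_delta_mx_0.
have pq : p^T *m psi R n *m q = (psi_form p q)%:M := mx11_scalar _.
rewrite /eichler mulmx_block; congr block_mx.
- rewrite mulmxDl !mulmxDr !mul1mx mulmx1 -scalemxAl -!scalemxAr vu0 !scaler0 addr0.
  rewrite mulmxN -mulmxA (mulmxA (p^T *m _)) pq mul_scalar_mx -scalemxAr mul_delta_mx.
  by apply/matrixP => a b; rewrite !mxE; ring.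
- rewrite mulmxDl mul1mx -scalemxAl (mulmxA (delta_mx v u)) mul_delta_mx_0 //.
  by rewrite mul0mx scaler0 addr0 mulmx1 linearD /= !mulmxDl mulmxDr addrC.
- rewrite mulmxDr mulmx1 mulNmx -scalemxAr -mulmxA mul_delta_mx_0 // mulmx0 scaler0.
  by rewrite mul1mx mulmxDl opprD subr0.
- by rewrite mulNmx (mulmxA (p *m _)) -(mulmxA p) u0v mulmx0 mul0mx oppr0 add0r mul1mx.
Qed.

Lemma eichler0 u v : eichler u v 0 0 = 1%:M.
Proof.
rewrite /eichler scale0r addr0 trmx0 !mul0mx mulmx0 oppr0.
by rewrite -(scalar_mx_block 2 P).
Qed.

Lemma eichler_inv u v q : u != v -> psi_form q q = 0 ->
  eichler u v 0 q *m eichler u v 0 (- q) = 1%:M /\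
  eichler u v 0 (- q) *m eichler u v 0 q = 1%:M.
Proof.
move=> uv q0; have inv p : psi_form p p = 0 -> eichler u v 0 p *m eichler u v 0 (- p) = 1%:M.
  move=> p0; have pNp : psi_form p (- p) = 0.
    by move: (psi_formDr p (- p) p); rewrite addNr psi_form0r p0 addr0.
  by rewrite eichlerM // pNp !addr0 !subrr eichler0.
split; first exact: inv.
by rewrite -{2}[q]opprK inv // psi_formNl psi_form_sym psi_formNl opprK.
Qed.

Local Notation h0 := (lshift 1 (0 : 'I_1)).
Local Notation h1 := (rshift 1 (0 : 'I_1)).

Lemma delta_mx11 : delta_mx 0 0 = 1%:M :> 'M[R]_1.
Proof. by rewrite [LHS]mx11_scalar mxE. Qed.

Lemma rho_eichler q : rho q = eichler h0 h1 0 q.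
Proof.
rewrite /rho /eichler scale0r addr0 delta_mx_dshift delta_mx_lshift mul_col_mx.
by rewrite mul_mx_row delta_mx11 mul0mx mulmx0 mul1mx mulmx1 opp_row_mx oppr0.
Qed.

Lemma mu_eichler q : mu q = eichler h1 h0 0 q.
Proof.
rewrite /mu /eichler scale0r addr0 delta_mx_ushift delta_mx_rshift mul_col_mx.
by rewrite mul_mx_row delta_mx11 mul0mx mulmx0 mul1mx mulmx1 opp_row_mx oppr0.
Qed.

Lemma sigo_rshift k : sigo (rshift 2 k : 'I_(n.+1.*2)) = rshift 2 (sigo k).
Proof. by apply: val_inj; rewrite /= !add2n sigSS. Qed.

Lemma sigo_lshift u v : u != v -> sigo (lshift P v : 'I_(n.+1.*2)) = lshift P u.
Proof.
apply: contraNeq; rewrite -val_eqE /=.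
by case: u => [[|[|?]] ?] //; case: v => [[|[|?]] ?].
Qed.

Lemma eichler_delta u v z k : u != v ->
  eichler u v 0 (z *: delta_mx k 0) = @oe R n.+1 (lshift P v) (rshift 2 (sigo k)) z.
Proof.
move=> uv; transitivity (1%:M + z *: (delta_mx (lshift P v) (rshift 2 (sigo k))
                                      - delta_mx (rshift 2 k) (lshift P u)) : 'M[R]_(2 + P)).
  rewrite delta_mx_ur delta_mx_dl scalar_mx_block opp_block_mx !oppr0.
  rewrite add_block_mx scale_block_mx add_block_mx /eichler.
  rewrite !(addr0, add0r, sub0r, scale0r, scaler0) linearZ /= trmx_delta -scalemxAl psi_row.
  by rewrite -scalemxAr mul_delta_mx -scalemxAl mul_delta_mx scalerN.
by rewrite oeE /oe_dir sigo_rshift sigoK (sigo_lshift uv).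
Qed.

Section Transvection.
Variable half : R.
Hypothesis halfE : half * 2 = 1.

(* The corner -<q,q>/2 is what makes transvectionD hold; it is the only use of 1/2. *)
Definition transvection u v q := eichler u v (- (half * psi_form q q)) q.

Lemma transvectionD u v p q : u != v ->
  transvection u v (p + q) = transvection u v p *m transvection u v q.
Proof.
move=> uv; apply/esym; rewrite /transvection eichlerM //.
rewrite psi_formDl !psi_formDr (psi_form_sym q p).
congr eichler; rewrite -[X in _ - X]mul1r -halfE; ring.
Qed.

Lemma transvection0 u v : transvection u v 0 = 1%:M.
Proof. by rewrite /transvection psi_form0r mulr0 oppr0 eichler0. Qed.

Lemma eichler_prod u v q : u != v -> psi_form q q = 0 ->
  eichler u v 0 q =
  \big[@mulmx R _ _ _/1%:M]_(k < P) @oe R n.+1 (lshift P v) (rshift 2 (sigo k)) (q k 0).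
Proof.
move=> uv q0; have -> : eichler u v 0 q = transvection u v q.
  by rewrite /transvection q0 mulr0 oppr0.
have {1}-> : q = \sum_(k < P) q k 0 *: delta_mx k 0.
  by rewrite {1}(matrix_sum_delta q); apply: eq_bigr => k _; rewrite big_ord1.
rewrite (big_morph _ (fun p q => transvectionD p q uv) (transvection0 u v)).
apply: eq_bigr => k _.
by rewrite /transvection psi_form_delta_self mulr0 oppr0 eichler_delta.
Qed.

End Transvection.

End Eichler.

Section EOvsETrans.
Variables (R : comPzRingType) (n : nat).
Local Notation P := n.*2.
Local Notation N := n.+1.*2.
Local Notation L v := (lshift P v : 'I_N).
Local Notation S k := (rshift 2 k : 'I_N).
Local Notation h0 := (lshift 1 (0 : 'I_1)).
Local Notation h1 := (rshift 1 (0 : 'I_1)).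
Implicit Types (J : R -> Prop) (u v : 'I_(1 + 1)) (k l : 'I_P) (z : R) (q : 'cV[R]_P).

Lemma lshift_neq_rshift v k : L v != S k.
Proof. by rewrite -val_eqE /= neq_ltn (leq_trans (ltn_ord v)) ?leq_addr. Qed.

Lemma lshift_neq_sig_rshift v k : val (L v) != sig (val (S k)).
Proof. by rewrite /= add2n sigSS neq_ltn (leq_trans (ltn_ord v)). Qed.

Lemma hyperbolic_cases v : v = h0 \/ v = h1.
Proof. by case: (split_ordP v) => w ->; rewrite (ord1 w); [left | right]. Qed.

Lemma etrans_gens_invertible J : invertible_set (@etrans_gens R n J).
Proof.
move=> _ [q [/isotropicP q0 _ [->|->]]].
- by exists (rho (- q)); rewrite !rho_eichler; apply: eichler_inv.
- by exists (mu (- q)); rewrite !mu_eichler; apply: eichler_inv.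
Qed.

Lemma oe_lshift_rshift_etrans J v k z :
  J 0 -> J z -> @etrans_gens R n J (oe (L v) (S k) z).
Proof.
move=> J0 Jz; exists (z *: delta_mx (sigo k) 0); split.
- exact/isotropicP/psi_form_delta_self.
- by move=> l; rewrite !mxE; case: (_ == _); rewrite ?mulr1 ?mulr0.
- case: (hyperbolic_cases v) => ->; [right; rewrite mu_eichler | left; rewrite rho_eichler].
  all: by rewrite eichler_delta ?sigoK.
Qed.

Lemma oe_rshift_lshift_etrans J v k z :
  J 0 -> J (- z) -> @etrans_gens R n J (oe (S k) (L v) z).
Proof.
move=> J0 Jz; rewrite oe_sym sigo_rshift.
case: (hyperbolic_cases v) => ->;
  [rewrite (@sigo_lshift _ h1 h0) // | rewrite (@sigo_lshift _ h0 h1) //].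
all: exact: oe_lshift_rshift_etrans.
Qed.

Lemma etrans_gens_sub_oe (half : R) J : half * 2 = 1 ->
  forall g, @etrans_gens R n J g -> gen (@oe_gens R n.+1 J) g.
Proof.
move=> halfE _ [q [/isotropicP q0 Jq [->|->]]]; rewrite ?rho_eichler ?mu_eichler;
  rewrite (eichler_prod halfE) //; apply: gen_prod => k; apply: genS.
all: do 3 eexists; split; last reflexivity.
all: by [exact: lshift_neq_rshift | exact: lshift_neq_sig_rshift | exact: Jq].
Qed.

Lemma oe_gens_sub J (G : 'M[R]_N -> Prop) : J 0 -> (forall z, J z -> J (- z)) ->
  (forall x y, G x -> G y -> G (x *m y)) -> (forall g, @etrans_gens R n J g -> G g) ->
  (forall g g' y, @etrans_gens R n (fun=> True) g -> g *m g' = 1%:M -> g' *m g = 1%:M ->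
     @etrans_gens R n J y -> G (g *m y *m g')) ->
  forall g, @oe_gens R n.+1 J g -> G g.
Proof.
move=> J0 JN mulG sEG conjG _ [i [j [z [+ + Jz ->]]]].
case: (split_ordP (i : 'I_(2 + P))) => {}i ->;
  case: (split_ordP (j : 'I_(2 + P))) => {}j -> ij sij.
- by exfalso; move: ij sij; rewrite -!val_eqE /=; case: (hyperbolic_cases i) => ->;
    case: (hyperbolic_cases j) => ->.
- by apply: sEG; apply: oe_lshift_rshift_etrans.
- by apply: sEG; apply: oe_rshift_lshift_etrans => //; exact: JN.
(* Both indices in P: commute through the hyperbolic index h0. *)
have pivot k : L h0 != S k /\ L h0 != sigo (S k).
  by rewrite sigo_rshift !lshift_neq_rshift.
have [? ?] := pivot i; have [? ?] := pivot j.
rewrite -[z]mulr1 -(@oe_commutator _ _ _ _ (L h0) z) // -!mulmxA (mulmxA (oe (L h0) _ _)).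
apply: mulG; first by apply: sEG; apply: oe_rshift_lshift_etrans => //; exact: JN.
apply: conjG; [exact: oe_lshift_rshift_etrans | exact: oe_inv | |].
- by rewrite -{2}[1]opprK oe_inv.
- by apply: oe_rshift_lshift_etrans; rewrite ?opprK.
Qed.

Lemma ETrans_sub_EO (half : R) : half * 2 = 1 ->
  forall g, @ETrans R n g -> @EO R n.+1 g.
Proof.
by move=> halfE; apply: gen_sub; [exact: oe_gens_invertible | exact: etrans_gens_sub_oe halfE].
Qed.

Lemma EO_sub_ETrans g : @EO R n.+1 g -> @ETrans R n g.
Proof.
apply: gen_sub; first exact: etrans_gens_invertible.
apply: oe_gens_sub => //.
- by move=> x y; apply: genM.
- by move=> x; apply: genS.
- move=> x x' y Sx xx' x'x Sy; apply: genM; first by apply: genM; apply: genS.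
  exact: genV Sx xx' x'x.
Qed.

Lemma oe_gens_sub_ETrans_rel J : J 0 -> (forall z, J z -> J (- z)) ->
  forall g, @oe_gens R n.+1 J g -> @ETrans_rel R n J g.
Proof.
move=> J0 JN; apply: oe_gens_sub => //.
- by move=> x y; apply: genM.
- by move=> x Sx; apply: ncl_gen; [exact: gen1 | exact: genS].
- by move=> x x' y Sx xx' x'x Sy; apply: genS; exists x, x', y; split; try apply: genS.
Qed.

End EOvsETrans.

Theorem mainTheorem9 (R : comPzRingType) (I : R -> Prop) (n : nat)
  (h2R : forall r : R, exists s : R, r = 2 * s)
  (hI : is_ideal I) (hn : (2 <= n)%N) :
  forall g : 'M[R]_(n.+1.*2), @ETrans_rel R n I g <-> @EO_rel R n.+1 I g.
Proof.
have [half halfE] : exists half : R, half * 2 = 1.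
  by have [s s1] := h2R 1; exists s; rewrite mulrC -s1.
have [I0 _ IM] := hI; have IN z : I z -> I (- z) by rewrite -mulN1r; apply: IM.
move=> g; split; apply: ncl_sub.
- by move=> x y; apply: genM.
- exact: oe_gens_invertible.
- exact: ETrans_sub_EO halfE.
- by move=> h Ih; apply: ncl_gen; [exact: gen1 | exact: etrans_gens_sub_oe halfE _ Ih].
- by move=> x y; apply: genM.
- exact: etrans_gens_invertible.
- exact: EO_sub_ETrans.
- exact: oe_gens_sub_ETrans_rel.
Qed.
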